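(* Let $\varphi:\mathbb{R}^n\to\mathbb{R}$ be of class $\mathcal C^{1,1}$ around its tilt-stable local minimizer $\bar x$. Then there is a neighborhood $O$ of $\bar x$ such that the set $\Upsilon(x):=\{y\in\mathbb{R}^n: -\nabla\varphi(x)\in D\nabla\varphi(x)(y)\}$ is nonempty and compact for all $x\in O$.
   Context: $\mathcal C^{1,1}$ near $\bar x$: differentiable with locally Lipschitz gradient near $\bar x$. Tangent cone $T_\Omega(\bar x)=\{w:\exists t_k\downarrow0,w_k\to w,\bar x+t_kw_k\in\Omega\}$; graphical derivative of single-valued $f$: $Df(x)(u)=\{w:(u,w)\in T_{\operatorname{gph}f}(x,f(x))\}$. $\bar x$ is a tilt-stable local minimizer of $\varphi$ if for some $\gamma>0$ the mapping $M_\gamma(v)=\operatorname{argmin}\{\varphi(x)-\langle v,x\rangle:x\in\mathbb B_\gamma(\bar x)\}$ is single-valued and Lipschitz continuous on a neighborhood of $0$, with $M_\gamma(0)=\{\bar x\}$. *)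

From HB Require Import structures.
From mathcomp Require Import all_boot all_order all_algebra.
From mathcomp Require Import all_classical all_reals all_analysis.
Set Implicit Arguments. Unset Strict Implicit. Unset Printing Implicit Defensive.
Import Order.TTheory GRing.Theory Num.Theory.
Import numFieldNormedType.Exports.
Local Open Scope classical_set_scope.
Local Open Scope ring_scope.

Section Defs.
Variables (R : realType) (n : nat).
Notation V := 'rV[R]_n.

Definition dotv (u v : V) : R := \sum_(i < n) u 0 i * v 0 i.
Definition enorm (u : V) : R := Num.sqrt (dotv u u).

Definition is_grad (f : V -> R) (x g : V) : Prop :=
  forall eps : R, 0 < eps -> exists2 del : R, 0 < del &
    forall h : V, enorm h < del ->
      `| f (x + h) - f x - dotv g h | <= eps * enorm h.

Definition C11_near (f : V -> R) (G : V -> V) (xbar : V) : Prop :=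
  exists2 r : R, 0 < r &
    (forall x, enorm (x - xbar) < r -> is_grad f x (G x)) /\
    (forall x, enorm (x - xbar) < r ->
       exists del L : R, 0 < del /\
         forall y z, enorm (y - x) < del -> enorm (z - x) < del ->
           enorm (G y - G z) <= L * enorm (y - z)).

Definition Mtilt (f : V -> R) (xbar : V) (gam : R) (v : V) : set V :=
  [set x | enorm (x - xbar) <= gam /\
           forall y, enorm (y - xbar) <= gam -> f x - dotv v x <= f y - dotv v y].

Definition tilt_stable_min (f : V -> R) (xbar : V) : Prop :=
  exists2 gam : R, 0 < gam &
    exists del L : R, exists m : V -> V, 0 < del /\
      (forall v, enorm v < del -> Mtilt f xbar gam v = [set m v]) /\
      (forall v w, enorm v < del -> enorm w < del ->
         enorm (m v - m w) <= L * enorm (v - w)) /\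
      Mtilt f xbar gam 0 = [set xbar].

End Defs.

Definition tangent_cone (R : realType) (E : normedModType R) (Om : set E) (x : E)
  : set E :=
  [set w | exists (t : nat -> R) (wk : nat -> E),
     (forall k, 0 < t k) /\ t @ \oo --> (0 : R) /\ wk @ \oo --> w /\
     (forall k, Om (x + t k *: wk k))].

Definition graph_of (R : realType) (n : nat) (g : 'rV[R]_n -> 'rV[R]_n)
  : set ('rV[R]_n * 'rV[R]_n) := [set p | p.2 = g p.1].

Definition graph_deriv (R : realType) (n : nat) (g : 'rV[R]_n -> 'rV[R]_n)
  (x u : 'rV[R]_n) : set 'rV[R]_n :=
  [set w | tangent_cone (graph_of g) (x, g x) (u, w)].

Definition Upsilon (R : realType) (n : nat) (G : 'rV[R]_n -> 'rV[R]_n)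
  (x : 'rV[R]_n) : set 'rV[R]_n :=
  [set y | graph_deriv G x y (- G x)].

From HB Require Import structures.
From mathcomp Require Import all_boot all_order all_algebra.
From mathcomp Require Import all_classical all_reals all_analysis.
From mathcomp Require Import ring lra.
Import Order.TTheory GRing.Theory Num.Theory.
Import numFieldNormedType.Exports.
Local Open Scope classical_set_scope.
Local Open Scope ring_scope.

(* The key fact is that the tilt map m, sending a tilt v to the minimizer of
   phi - <v,.> near xbar, is a Lipschitz inverse of G near xbar:
   m (G z) = z for z close to xbar.  Fermat's rule gives G (m v) = v; the
   converse inclusion (every z near xbar equals some m v) comes from
   maximizing the continuous dual function v |-> val v + <v, z> over a small
   ball of tilts, where val is the optimal tilted value, whose quadratic decay
   (descent lemma) keeps the maximizer interior.  Then:
   - compactness: |z - x| <= L |G z - G x| near x passes to the graphical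
     derivative, so Upsilon(x) lies in the ball of radius L |G x|, and the
     slices of a tangent cone are closed;
   - nonemptiness: (m ((1 - t) G x) - x) / t are bounded exact difference
     quotients of G with increment - G x, and a cluster point lies in
     Upsilon(x). *)

Section Euclid.
Context {R : realType} {n : nat}.
Implicit Types (u v w : 'rV[R]_n) (a : R).

Lemma dotvC u v : dotv u v = dotv v u.
Proof. by apply: eq_bigr => i _; rewrite mulrC. Qed.

Lemma dotvDl u v w : dotv (u + v) w = dotv u w + dotv v w.
Proof. by rewrite /dotv -big_split; apply: eq_bigr => i _; rewrite mxE mulrDl. Qed.

Lemma dotvDr u v w : dotv w (u + v) = dotv w u + dotv w v.
Proof. by rewrite dotvC dotvDl !(dotvC w). Qed.

Lemma dotvZl a u v : dotv (a *: u) v = a * dotv u v.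
Proof. by rewrite /dotv mulr_sumr; apply: eq_bigr => i _; rewrite mxE mulrA. Qed.

Lemma dotvZr a u v : dotv u (a *: v) = a * dotv u v.
Proof. by rewrite dotvC dotvZl dotvC. Qed.

Lemma dotvNl u v : dotv (- u) v = - dotv u v.
Proof. by rewrite -scaleN1r dotvZl mulN1r. Qed.

Lemma dotvBl u v w : dotv (u - v) w = dotv u w - dotv v w.
Proof. by rewrite dotvDl dotvNl. Qed.

Lemma dotvBr u v w : dotv w (u - v) = dotv w u - dotv w v.
Proof. by rewrite !(dotvC w) dotvBl. Qed.

Lemma dotv0l v : dotv 0 v = 0.
Proof. by rewrite -(scale0r 0) dotvZl mul0r. Qed.

Lemma dotvv_ge0 u : 0 <= dotv u u.
Proof. by apply: sumr_ge0 => i _; rewrite -expr2 sqr_ge0. Qed.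

Lemma dotvv_eq0 u : dotv u u = 0 -> u = 0.
Proof.
move=> uu0; apply/rowP => i; rewrite mxE.
have sq_ge0 (j : 'I_n) : true -> 0 <= u 0 j * u 0 j by rewrite -expr2 sqr_ge0.
have /eqP := @psumr_eq0P R _ _ (fun j => u 0 j * u 0 j) sq_ge0 uu0 i erefl.
by rewrite -expr2 sqrf_eq0 (_ : (0 : 'I_1) = ord0) // => /eqP.
Qed.

Lemma enorm_ge0 u : 0 <= enorm u.
Proof. exact: sqrtr_ge0. Qed.

Lemma enorm_sq u : enorm u ^+ 2 = dotv u u.
Proof. by rewrite /enorm sqr_sqrtr // dotvv_ge0. Qed.

Lemma enorm0 : enorm (0 : 'rV[R]_n) = 0.
Proof. by rewrite /enorm dotv0l sqrtr0. Qed.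

Lemma enorm_eq0 u : enorm u = 0 -> u = 0.
Proof. by move=> u0; apply: dotvv_eq0; rewrite -enorm_sq u0 expr0n. Qed.

Lemma enorm_gt0 u : u != 0 -> 0 < enorm u.
Proof.
move=> u0; rewrite lt_def enorm_ge0 andbT.
by apply: contra u0 => /eqP/enorm_eq0 ->.
Qed.

Lemma enormZ a u : enorm (a *: u) = `|a| * enorm u.
Proof.
by rewrite /enorm dotvZl dotvZr mulrA -expr2 sqrtrM ?sqr_ge0 // sqrtr_sqr.
Qed.

Lemma enormN u : enorm (- u) = enorm u.
Proof. by rewrite -scaleN1r enormZ normrN normr1 mul1r. Qed.

Lemma enormB u v : enorm (u - v) = enorm (v - u).
Proof. by rewrite -enormN opprB. Qed.

(* Cauchy-Schwarz, from the nonnegativity of |v|u -+ |u|v squared. *)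
Lemma abs_dotv_le u v : `|dotv u v| <= enorm u * enorm v.
Proof.
set A := enorm u; set B := enorm v; set P := dotv u v.
have uu : dotv u u = A ^+ 2 by rewrite enorm_sq.
have vv : dotv v v = B ^+ 2 by rewrite enorm_sq.
have minus_ge0 := dotvv_ge0 (B *: u - A *: v).
have plus_ge0 := dotvv_ge0 (B *: u + A *: v).
rewrite dotvBl !dotvBr !dotvZl !dotvZr (dotvC v u) uu vv -/P in minus_ge0.
rewrite dotvDl !dotvDr !dotvZl !dotvZr (dotvC v u) uu vv -/P in plus_ge0.
have [/enorm_eq0 u0|A0] := eqVneq A 0.
  by rewrite /P u0 dotv0l normr0 mulr_ge0 ?enorm_ge0.
have [/enorm_eq0 v0|B0] := eqVneq B 0.
  by rewrite /P v0 dotvC dotv0l normr0 mulr_ge0 ?enorm_ge0.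
have AB0 : 0 < A * B by rewrite mulr_gt0 // lt_def ?A0 ?B0 ?enorm_ge0.
rewrite ler_norml; apply/andP; split; rewrite -(ler_pM2l AB0); nra.
Qed.

Lemma dotv_le u v : dotv u v <= enorm u * enorm v.
Proof. exact: le_trans (ler_norm _) (abs_dotv_le u v). Qed.

Lemma enormD u v : enorm (u + v) <= enorm u + enorm v.
Proof.
rewrite -(@ler_pXn2r _ 2) ?nnegrE ?addr_ge0 ?enorm_ge0 //.
rewrite enorm_sq dotvDl !dotvDr (dotvC v u) -!enorm_sq.
by have := dotv_le u v; nra.
Qed.

(* The Euclidean norm is equivalent to the library's sup norm on 'rV_n,
   which carries the topology: |u| <= enorm u <= (n+1) |u|. *)
Lemma abs_coord_le u i : `|u 0 i| <= enorm u.
Proof.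
rewrite -(@ler_pXn2r _ 2) ?nnegrE ?enorm_ge0 // enorm_sq real_normK ?num_real //.
rewrite /dotv (bigD1 i) //= expr2 lerDl.
by apply: sumr_ge0 => j _; rewrite -expr2 sqr_ge0.
Qed.

Lemma supnorm_le_enorm u : `|u| <= enorm u.
Proof.
change (mx_norm u <= enorm u); rewrite mx_normrE.
apply: bigmax_le; first exact: enorm_ge0.
by move=> [a b] _ /=; rewrite (ord1 a); apply: abs_coord_le.
Qed.

Lemma enorm_le_supnorm u : enorm u <= n.+1%:R * `|u|.
Proof.
have abs_coord_sup i : `|u 0 i| <= `|u|.
  change (`|u 0 i| <= mx_norm u); rewrite mx_normrE.
  exact: (le_bigmax _ (fun ij : 'I_1 * 'I_n => `|u ij.1 ij.2|) (0, i)).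
have le_l1 : enorm u <= \sum_(i < n) `|u 0 i|.
  rewrite -(@ler_pXn2r _ 2) ?nnegrE ?enorm_ge0 ?sumr_ge0 // enorm_sq.
  rewrite expr2 mulr_suml /dotv; apply: ler_sum => i _.
  rewrite -[u 0 i * u 0 i]/(u 0 i ^+ 2) -real_normK ?num_real // expr2.
  by apply: ler_wpM2l => //; rewrite (bigD1 i) //= lerDl; exact: sumr_ge0.
apply: (le_trans le_l1); apply: le_trans (_ : \sum_(i < n) `|u| <= _).
  exact: ler_sum.
rewrite sumr_const card_ord -[_ *+ n]mulr_natl.
by apply: ler_wpM2r; rewrite ?normr_ge0 ?ler_nat.
Qed.

Lemma enorm_lt_supnorm u e : 0 < e -> `|u| < e / n.+1%:R -> enorm u < e.
Proof.
move=> e0 ue; apply: le_lt_trans (enorm_le_supnorm u) _.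
by rewrite mulrC -ltr_pdivlMr.
Qed.

Lemma enorm_lt_ball {z y : 'rV[R]_n} {e : R} :
  0 < e -> ball z (e / n.+1%:R) y -> enorm (z - y) < e.
Proof. by move=> e0; rewrite mx_norm_ball; apply: enorm_lt_supnorm. Qed.

Lemma cvg_enormP {T : Type} {F : set_system T} {FF : Filter F}
    (f : T -> 'rV[R]_n) w :
  f @ F --> w <-> forall e, 0 < e -> \forall k \near F, enorm (f k - w) < e.
Proof.
split=> [/cvgrPdist_lt cvg_f e e0|near_w].
  have /cvg_f : 0 < e / n.+1%:R by rewrite divr_gt0.
  by apply: filterS => k fk; apply: enorm_lt_supnorm => //; rewrite -normrN opprB.
apply/cvgrPdist_lt => e e0; apply: filterS (near_w e e0) => k wk.
by rewrite -normrN opprB; apply: le_lt_trans (supnorm_le_enorm _) wk.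
Qed.

Lemma continuous_enormP (f : 'rV[R]_n -> R) z :
  (forall e, 0 < e -> exists2 d, 0 < d &
     forall y, enorm (y - z) < d -> `|f y - f z| < e) ->
  {for z, continuous f}.
Proof.
move=> cont_f; apply/(@cvgrPdist_lt _ _ _ _ (nbhs_filter z)) => e e0.
have [d d0 fd] := cont_f e e0.
apply/nbhs_ballP; exists (d / n.+1%:R); first exact: (divr_gt0 d0 (ltr0Sn _ _)).
by move=> y /(enorm_lt_ball d0); rewrite enormB -normrN opprB => /fd.
Qed.

Lemma closed_eball (c : 'rV[R]_n) r : closed [set y | enorm (y - c) <= r].
Proof.
move=> y cl_y /=; apply/ler_addgt0Pr => e e0.
have [u [uc /(enorm_lt_ball e0) yu]] :=
  cl_y _ (nbhsx_ballx y (e / n.+1%:R) (divr_gt0 e0 (ltr0Sn _ _))).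
apply: le_trans (_ : enorm (y - u) + enorm (u - c) <= _).
  by have := enormD (y - u) (u - c); rewrite addrA subrK.
by rewrite addrC lerD // ltW.
Qed.

Lemma bounded_enorm (A : set 'rV[R]_n) B :
  (forall y, A y -> enorm y <= B) -> bounded_set A.
Proof.
move=> AB; apply: filterS (nbhs_pinfty_ge (num_real B)) => M BM y Ay /=.
exact: le_trans (supnorm_le_enorm _) (le_trans (AB _ Ay) BM).
Qed.

Lemma compact_eball r : compact [set y : 'rV[R]_n | enorm y <= r].
Proof.
apply: bounded_closed_compact; first exact: (@bounded_enorm _ r).
by have := closed_eball 0 r; under eq_set do rewrite subr0.
Qed.

End Euclid.

Section Calculus.
Context {R : realType} {n : nat}.
Context {phi : 'rV[R]_n -> R}.

(* Otherwise a small step from z along v - g would decrease phi - <v,.>. *)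
Lemma grad_eq_at_ball_min (c z v g : 'rV[R]_n) gam :
  is_grad phi z g ->
  (forall y, enorm (y - c) <= gam -> phi z - dotv v z <= phi y - dotv v y) ->
  enorm (z - c) < gam -> g = v.
Proof.
move=> grad_z zmin zc; have [/eqP|dn0] := eqVneq (v - g) 0.
  by rewrite subr_eq0 => /eqP.
exfalso; set d := v - g in dn0; set a := enorm d.
have a0 : 0 < a by apply: enorm_gt0.
have [del del0 grad_del] := grad_z (a / 2) (divr_gt0 a0 (ltr0Sn _ 1)).
set s := Num.min del (gam - enorm (z - c)).
have s0 : 0 < s by rewrite lt_min del0 subr_gt0.
have s_del : s <= del by rewrite ge_min lexx.
have s_gap : s <= gam - enorm (z - c) by rewrite ge_min lexx orbT.
set t := s / (2 * a).
have t0 : 0 < t by rewrite divr_gt0 // mulr_gt0.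
have step : enorm (t *: d) = s / 2.
  by rewrite enormZ gtr0_norm // /t -/a; field; exact: lt0r_neq0.
have /grad_del : enorm (t *: d) < del by rewrite step; lra.
rewrite ler_norml step => /andP[_ taylor].
have /zmin : enorm (z + t *: d - c) <= gam.
  by rewrite addrAC; apply: le_trans (enormD _ _) _; rewrite step; lra.
rewrite dotvDr => descent.
have dd : dotv v (t *: d) - dotv g (t *: d) = t * a ^+ 2.
  by rewrite -dotvBl dotvZr enorm_sq.
have : t * a ^+ 2 = s * a / 2 by rewrite /t; field; exact: lt0r_neq0.
have : 0 < s * a by rewrite mulr_gt0.
lra.
Qed.

Lemma is_derive_along_line (x h g : 'rV[R]_n) (s0 : R) :
  is_grad phi (x + s0 *: h) g ->
  is_derive s0 1 (fun s : R => phi (x + s *: h)) (dotv g h).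
Proof.
move=> grad_g.
suff quot : (fun t : R => t^-1 *: (((fun s => phi (x + s *: h)) \o shift s0)
    (t *: 1) - phi (x + s0 *: h))) @ 0^' --> dotv g h.
  by apply: DeriveDef; [exact: cvgP quot | exact: cvg_lim quot].
apply/cvgrPdist_le => e e0.
set b := enorm h + 1.
have b0 : 0 < b by rewrite /b ltr_pwDr // enorm_ge0.
have [del del0 grad_del] := grad_g (e / b) (divr_gt0 e0 b0).
rewrite /= near_withinE; apply/nbhs_ballP; exists (del / b); first exact: divr_gt0.
move=> t /=; rewrite /ball /= sub0r normrN => tdel tn0.
have -> : x + (t%:A + s0) *: h = x + s0 *: h + t *: h.
  by rewrite [t%:A]mulr1 scalerDl [t *: h + _]addrC addrA.
have th_del : enorm (t *: h) < del.
  rewrite enormZ; apply: (@le_lt_trans _ _ (`|t| * b)).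
    by apply: ler_wpM2l => //; rewrite /b lerDl.
  by rewrite -ltr_pdivlMr.
have := grad_del _ th_del.
set D := phi (x + s0 *: h + t *: h) - phi (x + s0 *: h).
have -> : dotv g h - t^-1 *: D = - t^-1 * (D - dotv g (t *: h)).
  by rewrite dotvZr /GRing.scale /=; field.
rewrite normrM normrN normfV -ler_pdivlMl ?invr_gt0 ?normr_gt0 // invrK => rem.
apply: le_trans rem _; rewrite enormZ mulrCA; apply: ler_wpM2l => //.
by rewrite mulrAC ler_pdivrMr // ler_pM2l // /b lerDl.
Qed.

(* Descent lemma: a K-Lipschitz gradient bounds phi above by its first-order
   expansion plus K |h|^2 (a consequence of the mean value theorem). *)
Lemma descent_bound {G : 'rV[R]_n -> 'rV[R]_n} {x h : 'rV[R]_n} {K r : R} :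
  (forall y, enorm (y - x) < r -> is_grad phi y (G y)) ->
  (forall y z, enorm (y - x) < r -> enorm (z - x) < r ->
     enorm (G y - G z) <= K * enorm (y - z)) ->
  enorm h < r -> 0 <= K ->
  phi (x + h) - phi x - dotv (G x) h <= K * enorm h ^+ 2.
Proof.
move=> grad_G lipG hr K0.
have on_segment (s : R) : 0 <= s <= 1 -> enorm (x + s *: h - x) <= enorm h.
  move=> /andP[s0 s1]; rewrite addrC addKr enormZ ger0_norm //.
  by rewrite -[leRHS]mul1r ler_wpM2r ?enorm_ge0.
have deriv (s : R) : 0 <= s <= 1 ->
    is_derive s 1 (fun s => phi (x + s *: h)) (dotv (G (x + s *: h)) h).
  move=> s01; apply: is_derive_along_line; apply: grad_G.
  exact: le_lt_trans (on_segment _ s01) hr.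
have cont : {within `[0, 1], continuous (fun s => phi (x + s *: h))}.
  apply: derivable_within_continuous => s; rewrite in_itv /= => s01.
  exact: (@ex_derive _ _ _ _ _ _ _ (deriv s s01)).
have deriv_open (s : R) : s \in `]0, 1[ ->
    is_derive s 1 (fun s => phi (x + s *: h)) (dotv (G (x + s *: h)) h).
  by rewrite in_itv /= => /andP[s0 s1]; apply: deriv; rewrite !ltW.
have [c c01 mvt] := MVT_segment ler01 deriv_open cont.
move: mvt c01; rewrite scale1r scale0r addr0 subr0 mulr1 in_itv /= => -> c01.
have cseg := on_segment c c01.
rewrite -dotvBl; apply: le_trans (dotv_le _ _) _.
rewrite expr2 mulrA ler_wpM2r ?enorm_ge0 //.
apply: le_trans (lipG _ _ (le_lt_trans cseg hr) _) _.
  by rewrite subrr enorm0; apply: le_lt_trans (enorm_ge0 h) hr.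
by apply: ler_wpM2l => //; rewrite addrC addKr; rewrite addrC addKr in cseg.
Qed.

End Calculus.

Section GraphicalDerivative.
Context {R : realType} {n : nat}.
Context {G : 'rV[R]_n -> 'rV[R]_n} {x : 'rV[R]_n}.

Lemma graph_derivP (u w : 'rV[R]_n) :
  graph_deriv G x u w <->
  forall e, 0 < e -> exists t y z, [/\ 0 < t, t < e, enorm (y - u) < e,
    enorm (z - w) < e & G (x + t *: y) = G x + t *: z].
Proof.
split=> [[t [p [t0 [t_cvg [p_cvg on_graph]]]]] e e0|approx].
  have /cvg_enormP /(_ e e0) y_near :=
    cvg_comp _ _ p_cvg (@cvg_fst _ _ _ _ (nbhs_filter _)).
  have /cvg_enormP /(_ e e0) z_near :=
    cvg_comp _ _ p_cvg (@cvg_snd _ _ _ _ (nbhs_filter _)).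
  move/cvgrPdist_lt: t_cvg => /(_ e e0) t_near.
  have [k [yk [zk tk]]] := filter_ex (filterI y_near (filterI z_near t_near)).
  exists (t k), (p k).1, (p k).2; split => //.
  - by move: tk; rewrite sub0r normrN gtr0_norm.
  - by have := on_graph k; rewrite /graph_of /=; case: (p k) => a b /= ->.
have /choice [f fP] : forall k : nat, exists f : R * ('rV[R]_n * 'rV[R]_n),
    [/\ 0 < f.1, f.1 < k.+1%:R^-1, enorm (f.2.1 - u) < k.+1%:R^-1,
        enorm (f.2.2 - w) < k.+1%:R^-1 & G (x + f.1 *: f.2.1) = G x + f.1 *: f.2.2].
  move=> k; have k0 : 0 < k.+1%:R^-1 :> R by rewrite invr_gt0.
  have [t [y [z tyz]]] := approx _ k0.
  by exists (t, (y, z)).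
have near_inv e : 0 < e -> \forall k \near \oo, k.+1%:R^-1 < e :> R.
  by move=> e0; apply: near_infty_natSinv_lt (PosNum e0).
exists (fun k => (f k).1), (fun k => (f k).2); split; [|split; [|split]].
- by move=> k; have [] := fP k.
- apply/cvgrPdist_lt => e /near_inv; apply: filterS => k.
  have [t0 t_lt _ _ _] := fP k.
  by rewrite sub0r normrN gtr0_norm //; apply: lt_trans.
- have y_cvg : (fun k => (f k).2.1) @ \oo --> u.
    apply/cvg_enormP => e /near_inv; apply: filterS => k.
    by have [_ _ yk _ _] := fP k; apply: lt_trans.
  have z_cvg : (fun k => (f k).2.2) @ \oo --> w.
    apply/cvg_enormP => e /near_inv; apply: filterS => k.
    by have [_ _ _ zk _] := fP k; apply: lt_trans.
  have -> : (fun k => (f k).2) = (fun k => ((f k).2.1, (f k).2.2)).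
    by apply/funext => k; case: (f k).2.
  exact: (@cvg_pair _ _ _ _ _ _ _ (nbhs_filter u) (nbhs_filter w) _ _ y_cvg z_cvg).
- by move=> k; rewrite /graph_of /=; have [_ _ _ _ ->] := fP k.
Qed.

Lemma closed_graph_deriv (w : 'rV[R]_n) : closed [set u | graph_deriv G x u w].
Proof.
move=> u cl_u; apply/graph_derivP => e e0.
have e20 : 0 < e / 2 by rewrite divr_gt0.
have [v [/graph_derivP /(_ _ e20) [t [y [z [t0 te yv zw onG]]]]]] :=
  cl_u _ (nbhsx_ballx u (e / 2 / n.+1%:R) (divr_gt0 e20 (ltr0Sn _ _))).
move=> /(enorm_lt_ball e20) uv.
exists t, y, z; split => //; try lra.
have := enormD (y - v) (v - u); rewrite addrA subrK enormB (enormB v).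
lra.
Qed.

Lemma graph_deriv_bound {L rho : R} {u w : 'rV[R]_n} : 0 <= L -> 0 < rho ->
  (forall z, enorm (z - x) < rho -> enorm (z - x) <= L * enorm (G z - G x)) ->
  graph_deriv G x u w -> enorm u <= L * enorm w.
Proof.
move=> L0 rho0 inv_lip /graph_derivP approx; apply/ler_addgt0Pr => e e0.
have u2 : 0 < enorm u + 2 by have := enorm_ge0 u; lra.
have L1 : 0 < L + 1 by lra.
set e' := Num.min (Num.min 1 (e / (L + 1))) (rho / (enorm u + 2)).
have e'1 : e' <= 1 by rewrite !ge_min lexx.
have e'e : e' * (L + 1) <= e.
  by rewrite -ler_pdivlMr // !ge_min lexx orbT.
have e'rho : e' * (enorm u + 2) <= rho.
  by rewrite -ler_pdivlMr // !ge_min lexx !orbT.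
have e'0 : 0 < e' by rewrite !lt_min ltr01 !divr_gt0.
have [t [y [z [t0 te' yu zw onG]]]] := approx e' e'0.
have yle : enorm y <= enorm u + 1.
  by have := enormD (y - u) u; rewrite subrK; lra.
have ty_rho : enorm (x + t *: y - x) < rho.
  rewrite addrC addKr enormZ gtr0_norm //.
  have := enorm_ge0 y; nra.
have := inv_lip _ ty_rho; rewrite onG ![_ + t *: _]addrC !addrK !enormZ.
rewrite gtr0_norm // mulrCA ler_pM2l // => yz.
have := enormD (z - w) w; rewrite subrK => zle.
have := enormD (u - y) y; rewrite subrK enormB => ule.
have : L * enorm z <= L * (e' + enorm w) by apply: ler_wpM2l => //; lra.
nra.
Qed.

Lemma graph_deriv_of_quotients {w : 'rV[R]_n} {B : R} (q : R -> 'rV[R]_n) :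
  (forall t, 0 < t -> t <= 1 ->
     enorm (q t) <= B /\ G (x + t *: q t) = G x + t *: w) ->
  exists u, graph_deriv G x u w.
Proof.
move=> quot.
have near_q : (q @ 0^'+) [set y | enorm y <= B].
  apply: filterS2 (nbhs_right_gt 0) (nbhs_right_lt ltr01) => t t0 t1.
  by have [] := quot t t0 (ltW t1).
have [u [_ cl_u]] := compact_eball B _ _ near_q.
exists u; apply/graph_derivP => e e0.
have e1 : 0 < Num.min e 1 by rewrite lt_min e0 ltr01.
have small_q : (q @ 0^'+) [set y | exists2 t, 0 < t < Num.min e 1 & y = q t].
  apply: filterS2 (nbhs_right_gt 0) (nbhs_right_lt e1) => t t0 t1.
  by exists t => //; rewrite t0 t1.
have eN : 0 < e / n.+1%:R by rewrite divr_gt0.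
have [_ [[t /andP[t0]] + -> /(enorm_lt_ball e0) uq]] :=
  cl_u _ _ small_q (nbhsx_ballx u _ eN).
rewrite lt_min => /andP[te t1]; have [_ onG] := quot t t0 (ltW t1).
by exists t, (q t), w; rewrite enormB subrr enorm0.
Qed.

End GraphicalDerivative.

Section Setting.
Local Set Implicit Arguments.
Context {R : realType} {n : nat}.

Record tilt_setting (phi : 'rV[R]_n -> R) (G m : 'rV[R]_n -> 'rV[R]_n)
    (xb : 'rV[R]_n) (r gam del K L : R) : Prop := TiltSetting {
  r_gt0 : 0 < r;
  gam_gt0 : 0 < gam;
  del_gt0 : 0 < del;
  K_ge1 : 1 <= K;
  L_ge1 : 1 <= L;
  grad_near : forall x, enorm (x - xb) < r -> is_grad phi x (G x);
  grad_lip : forall y z, enorm (y - xb) < r -> enorm (z - xb) < r ->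
    enorm (G y - G z) <= K * enorm (y - z);
  tilt_min : forall v, enorm v < del -> Mtilt phi xb gam v (m v);
  tilt_lip : forall v w, enorm v < del -> enorm w < del ->
    enorm (m v - m w) <= L * enorm (v - w);
  tilt_at0 : m 0 = xb }.

(* The hypotheses of the theorem provide such a setting (shrinking radii and
   enlarging Lipschitz constants where convenient). *)
Lemma tilt_setting_of (phi : 'rV[R]_n -> R) (G : 'rV[R]_n -> 'rV[R]_n) xb :
  C11_near phi G xb -> tilt_stable_min phi xb ->
  exists m r gam del K L, tilt_setting phi G m xb r gam del K L.
Proof.
have xbxb : enorm (xb - xb) = 0 by rewrite subrr enorm0.
case=> r0 r00 [grad_G loc]; have [r1 [K [r10 lipG]]] := loc xb ltac:(by rewrite xbxb).
case=> gam gam0 [del [L [m [del0 [mP [lipm mP0]]]]]].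
have m0 : m 0 = xb.
  have : Mtilt phi xb gam 0 (m 0) by rewrite mP ?enorm0.
  by rewrite mP0.
have absK : K <= `|K| + 1 by apply: le_trans (ler_norm K) _; rewrite lerDl.
have absL : L <= `|L| + 1 by apply: le_trans (ler_norm L) _; rewrite lerDl.
exists m, (Num.min r0 r1), gam, del, (`|K| + 1), (`|L| + 1).
split; rewrite ?lt_min ?r00 ?r10 ?lerDr //.
- by move=> x; rewrite lt_min => /andP[x0 _]; apply: grad_G.
- move=> y z; rewrite !lt_min => /andP[_ y1] /andP[_ z1].
  by apply: le_trans (lipG _ _ y1 z1) _; rewrite ler_wpM2r ?enorm_ge0.
- by move=> v vdel; rewrite mP.
- move=> v w vdel wdel.
  by apply: le_trans (lipm _ _ vdel wdel) _; rewrite ler_wpM2r ?enorm_ge0.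
Qed.

End Setting.

Section TiltStability.
Context {R : realType} {n : nat}.
Context {phi : 'rV[R]_n -> R} {G m : 'rV[R]_n -> 'rV[R]_n} {xb : 'rV[R]_n}.
Context {r gam del K L : R}.
Hypothesis T : tilt_setting phi G m xb r gam del K L.

Let r0 : 0 < r := r_gt0 T.
Let gam0 : 0 < gam := gam_gt0 T.
Let del0 : 0 < del := del_gt0 T.
Let K0 : 0 < K := lt_le_trans ltr01 (K_ge1 T).
Let L0 : 0 < L := lt_le_trans ltr01 (L_ge1 T).

(* Radius of the ball around xb inside which the tilted minimizers are
   interior points of the constraint ball and phi is C^{1,1}. *)
Let c := Num.min r gam.
Let c0 : 0 < c. Proof. by rewrite lt_min r0 gam0. Qed.
Let c_r : c <= r. Proof. by rewrite ge_min lexx. Qed.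
Let c_gam : c <= gam. Proof. by rewrite ge_min lexx orbT. Qed.

Lemma grad_center_eq0 : G xb = 0.
Proof.
have del_0 : enorm (0 : 'rV[R]_n) < del by rewrite enorm0.
have xbxb : enorm (xb - xb) < c by rewrite subrr enorm0.
have [_ min0] := tilt_min T _ del_0; rewrite (tilt_at0 T) in min0.
exact: grad_eq_at_ball_min (grad_near T _ (lt_le_trans xbxb c_r)) min0
  (lt_le_trans xbxb c_gam).
Qed.

Lemma grad_tilt_map u : enorm u < del -> enorm (m u - xb) < c -> G (m u) = u.
Proof.
move=> udel mu_c; have [_ min_u] := tilt_min T _ udel.
exact: grad_eq_at_ball_min (grad_near T _ (lt_le_trans mu_c c_r)) min_u
  (lt_le_trans mu_c c_gam).
Qed.

Let val (v : 'rV[R]_n) := phi (m v) - dotv v (m v).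
Let dual (x v : 'rV[R]_n) := val v + dotv v x.

(* As a minimum of functions affine in v over a bounded set, the optimal
   value is Lipschitz in the tilt. *)
Lemma tilt_value_lip {v w : 'rV[R]_n} : enorm v < del -> enorm w < del ->
  val v - val w <= (enorm xb + gam) * enorm (v - w).
Proof.
move=> vdel wdel; have [_ min_v] := tilt_min T _ vdel.
have [mw_ball _] := tilt_min T _ wdel.
have /min_v val_v : enorm (m w - xb) <= gam by [].
have mw_le : enorm (m w) <= enorm xb + gam.
  by have := enormD (m w - xb) xb; rewrite subrK; lra.
apply: le_trans (_ : dotv (w - v) (m w) <= _).
  by rewrite /val dotvBl; lra.
apply: le_trans (dotv_le _ _) _; rewrite enormB mulrC.
by apply: ler_wpM2r; rewrite ?enorm_ge0.
Qed.

Lemma dual_continuous x v0 : enorm v0 < del -> {for v0, continuous (dual x)}.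
Proof.
move=> v0del; apply: continuous_enormP => e e0.
set C := enorm xb + gam + enorm x + 1.
have C0 : 0 < C.
  by rewrite /C; have := enorm_ge0 xb; have := enorm_ge0 x; have := gam0; lra.
exists (Num.min (del - enorm v0) (e / C)); first by rewrite lt_min subr_gt0 v0del divr_gt0.
move=> v; rewrite lt_min => /andP[vv0_del vv0_e].
have vdel : enorm v < del.
  by have := enormD (v - v0) v0; rewrite subrK; lra.
have lip1 := tilt_value_lip vdel v0del.
have lip2 := tilt_value_lip v0del vdel; rewrite (enormB v0) in lip2.
have := abs_dotv_le (v - v0) x; rewrite ler_norml => /andP[cs1 cs2].
have dualB : dual x v - dual x v0 = val v - val v0 + dotv (v - v0) x.
  by rewrite /dual dotvBl; ring.
rewrite ltr_pdivlMr // in vv0_e.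
have := enorm_ge0 (v - v0); rewrite dualB ltr_norml /C in vv0_e * => a0.
by apply/andP; split; lra.
Qed.

(* Radius of the ball of tilts on which the dual problem is maximized. *)
Let rho := Num.min (del / 2) c.
Let rho0 : 0 < rho. Proof. by rewrite lt_min divr_gt0. Qed.
Let rho_del : rho < del.
Proof. by rewrite gt_min; apply/orP; left; have := del0; lra. Qed.
Let rho_c : rho <= c. Proof. by rewrite ge_min lexx orbT. Qed.

(* Quadratic decrease of the optimal value, from comparing with the point
   xb + v / (2K) and the descent lemma (G xb = 0). *)
Lemma tilt_value_upper {v : 'rV[R]_n} : enorm v <= rho ->
  val v <= phi xb - dotv v xb - enorm v ^+ 2 / (4 * K).
Proof.
move=> vrho; set h := (2 * K)^-1 *: v; set a := enorm v ^+ 2 / (4 * K).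
have K2 : 0 < 2 * K by rewrite mulr_gt0.
have h_c : enorm h < c.
  rewrite /h enormZ gtr0_norm ?invr_gt0 // mulrC ltr_pdivrMr //.
  by have := K_ge1 T; have := rho_c; have := c0; nra.
have [_ min_v] := tilt_min T _ (le_lt_trans vrho rho_del).
have /min_v : enorm (xb + h - xb) <= gam.
  by rewrite addrC addKr; have := c_gam; lra.
have := descent_bound (grad_near T) (grad_lip T) (lt_le_trans h_c c_r) (ltW K0).
have Kn0 : K != 0 by rewrite gt_eqF.
have vh : dotv v h = 2 * a by rewrite /h dotvZr -enorm_sq /a; field.
have Kh : K * enorm h ^+ 2 = a.
  by rewrite /h enormZ gtr0_norm ?invr_gt0 // /a; field.
rewrite grad_center_eq0 dotv0l Kh dotvDr vh /val; lra.
Qed.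

Lemma dual_max_interior {x vs : 'rV[R]_n} : enorm (x - xb) < rho / (4 * K) ->
  enorm vs <= rho -> (forall v, enorm v <= rho -> dual x v <= dual x vs) ->
  enorm vs < rho.
Proof.
move=> x_near vs_rho vs_max.
have /vs_max : enorm (0 : 'rV[R]_n) <= rho by rewrite enorm0 ltW.
rewrite /dual /val (tilt_at0 T) !dotv0l subr0 addr0 => dual0.
have K4 : 0 < 4 * K by rewrite mulr_gt0.
have upper := tilt_value_upper vs_rho.
have cs := dotv_le vs (x - xb); rewrite dotvBr in cs.
have quad : enorm vs ^+ 2 <= enorm vs * enorm (x - xb) * (4 * K).
  by rewrite -ler_pdivrMr //; move: upper; rewrite /val; set A := _ / _; lra.
rewrite ltr_pdivlMr // in x_near; have := rho0; have := enorm_ge0 vs.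
move: quad x_near; move: (enorm vs) (enorm (x - xb)) => a q; nra.
Qed.

(* An interior maximizer vs of the dual at x recovers x = m vs: moving the
   tilt from vs towards d = x - m vs by a small step s would otherwise increase
   the dual, since m is L-Lipschitz. *)
Lemma dual_max_attained {x vs : 'rV[R]_n} : enorm vs < rho ->
  (forall v, enorm v <= rho -> dual x v <= dual x vs) -> m vs = x.
Proof.
move=> vs_rho vs_max; have vs_del := lt_trans vs_rho rho_del.
set d := x - m vs; have d0 := enorm_ge0 d.
have d1 : 0 < 2 * (enorm d + 1) by rewrite mulr_gt0 //; lra.
set s := Num.min ((rho - enorm vs) / (2 * (enorm d + 1))) (1 / (2 * L)).
have L2 : 0 < 2 * L by rewrite mulr_gt0.
have s0 : 0 < s.
  rewrite lt_min; apply/andP; split; last exact: divr_gt0 ltr01 L2.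
  by apply: divr_gt0 _ d1; rewrite subr_gt0.
have sd : s * enorm d < rho - enorm vs.
  have : s * (2 * (enorm d + 1)) <= rho - enorm vs.
    by rewrite -ler_pdivlMr // ge_min lexx.
  have := mulr_ge0 (ltW s0) d0; lra.
have Ls : L * s <= 1 / 2.
  have : s * (2 * L) <= 1 by rewrite -ler_pdivlMr // ge_min lexx orbT.
  lra.
set w := vs + s *: d.
have w_rho : enorm w <= rho.
  by have := enormD vs (s *: d); rewrite enormZ gtr0_norm // -/w; lra.
have w_del := le_lt_trans w_rho rho_del.
have dual_w := vs_max _ w_rho.
have [mw_ball _] := tilt_min T _ w_del; have [_ /(_ _ mw_ball) val_vs] := tilt_min T _ vs_del.
have step : dotv d x - dotv d (m w) <= 0.
  rewrite -(pmulr_rle0 _ s0); move: dual_w.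
  by rewrite /dual /val /w !(dotvDl vs) !dotvZl; lra.
have lip : dotv d (m w - m vs) <= enorm d * (L * (s * enorm d)).
  apply: le_trans (dotv_le _ _) _; rewrite ler_wpM2l //.
  apply: le_trans (tilt_lip T _ _ w_del vs_del) _.
  by rewrite /w addrC addKr enormZ gtr0_norm.
have dd : dotv d d = enorm d ^+ 2 by rewrite enorm_sq.
rewrite {2}/d !dotvBr in dd lip.
have /eqP : enorm d = 0 by apply/le_anti; rewrite enorm_ge0 andbT; nra.
by rewrite (enormB x) => /eqP/enorm_eq0/eqP; rewrite subr_eq0 => /eqP.
Qed.

(* Every point close to xb is a tilted minimizer: maximize the dual. *)
Lemma tilt_map_onto : exists2 rx, 0 < rx &
  forall x, enorm (x - xb) < rx -> exists2 v, enorm v < del & m v = x.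
Proof.
exists (rho / (4 * K)); first by rewrite divr_gt0 // mulr_gt0.
move=> x x_near; set A := [set v : 'rV[R]_n | enorm v <= rho].
have A0 : A !=set0 by exists 0; rewrite /A /= enorm0 ltW.
have cont : {within A, continuous dual x}.
  apply: continuous_in_subspaceT => v; rewrite inE /A /= => vrho.
  exact: dual_continuous (le_lt_trans vrho rho_del).
have [vs] := EVT_max_rV A0 (compact_eball rho) cont.
rewrite inE /A /= => vs_rho vs_max.
have {}vs_max v : enorm v <= rho -> dual x v <= dual x vs.
  by move=> vrho; apply: vs_max; rewrite inE.
have vs_int := dual_max_interior x_near vs_rho vs_max.
by exists vs; [exact: lt_trans vs_int rho_del | exact: dual_max_attained].
Qed.

Lemma tilt_map_inverts_grad : exists2 r1, 0 < r1 &
  forall z, enorm (z - xb) < r1 -> enorm (G z) < del /\ m (G z) = z.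
Proof.
have [rx rx0 onto] := tilt_map_onto.
exists (Num.min rx c); first by rewrite lt_min rx0 c0.
move=> z; rewrite lt_min => /andP[z_rx z_c].
have [v vdel mv] := onto z z_rx.
by rewrite -mv grad_tilt_map // mv.
Qed.

(* Graphical derivatives of G near xb inherit the Lipschitz bound of m. *)
Lemma upsilon_bounded_near : exists2 r1, 0 < r1 &
  forall x, enorm (x - xb) < r1 ->
    forall y, Upsilon G x y -> enorm y <= L * enorm (G x).
Proof.
have [r1 r10 inv] := tilt_map_inverts_grad.
exists r1 => // x x_r1 y; rewrite /Upsilon /= -(enormN (G x)) => Dy.
apply: (graph_deriv_bound (rho := r1 - enorm (x - xb)) (ltW L0) _ _ Dy).
  by rewrite subr_gt0.
move=> z zx; have z_r1 : enorm (z - xb) < r1.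
  by have := enormD (z - x) (x - xb); rewrite addrA subrK; lra.
have [Gz_del mGz] := inv z z_r1; have [Gx_del mGx] := inv x x_r1.
by have := tilt_lip T _ _ Gz_del Gx_del; rewrite mGz mGx.
Qed.

Let del' := Num.min del (c / L).

Lemma grad_tilt_small u : enorm u < del' -> G (m u) = u.
Proof.
rewrite lt_min => /andP[udel uc]; apply: grad_tilt_map => //.
have del_0 : enorm (0 : 'rV[R]_n) < del by rewrite enorm0.
have := tilt_lip T _ _ udel del_0; rewrite (tilt_at0 T) subr0 => lip.
by apply: le_lt_trans lip _; rewrite mulrC -ltr_pdivlMr.
Qed.

(* Near xb, Upsilon is nonempty: the quotients (m((1-t) G x) - x) / t are
   exact difference quotients of G with increment - G x, bounded by L |G x|. *)
Lemma upsilon_nonempty_near : exists2 r2, 0 < r2 &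
  forall x, enorm (x - xb) < r2 -> Upsilon G x !=set0.
Proof.
have [r1 r10 inv] := tilt_map_inverts_grad.
have del'0 : 0 < del' by rewrite lt_min del0 divr_gt0.
exists (Num.min r1 (Num.min r (del' / K))); first by rewrite !lt_min r10 r0 divr_gt0.
move=> x; rewrite !lt_min => /andP[x_r1 /andP[x_r x_del']].
have [Gx_del mGx] := inv x x_r1.
have Gx_small : enorm (G x) < del'.
  have xb_r : enorm (xb - xb) < r by rewrite subrr enorm0.
  have := grad_lip T _ _ x_r xb_r; rewrite grad_center_eq0 subr0 => lip.
  by apply: le_lt_trans lip _; rewrite mulrC -ltr_pdivlMr.
pose q t := t^-1 *: (m ((1 - t) *: G x) - x).
suff [y Dy] : exists y, graph_deriv G x y (- G x) by exists y.
apply: (graph_deriv_of_quotients (B := L * enorm (G x)) q) => t t0 t1.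
have u_small : enorm ((1 - t) *: G x) < del'.
  rewrite enormZ ger0_norm ?subr_ge0 //; apply: le_lt_trans Gx_small.
  by rewrite ler_piMl ?enorm_ge0 //; lra.
have u_del : enorm ((1 - t) *: G x) < del.
  by apply: lt_le_trans u_small _; rewrite ge_min lexx.
split.
- rewrite /q enormZ ger0_norm; last by rewrite invr_ge0 ltW.
  rewrite ler_pdivrMl // -{2}mGx.
  apply: le_trans (tilt_lip T _ _ u_del Gx_del) _.
  rewrite scalerBl scale1r addrAC subrr add0r enormN enormZ gtr0_norm //.
  by rewrite mulrCA.
- rewrite /q scalerA mulfV ?gt_eqF // scale1r addrC subrK grad_tilt_small //.
  by rewrite scalerBl scale1r scalerN.
Qed.

End TiltStability.

Theorem proposition5p2 (R : realType) (n : nat)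
  (phi : 'rV[R]_n -> R) (G : 'rV[R]_n -> 'rV[R]_n) (xbar : 'rV[R]_n)
  (hC11 : C11_near phi G xbar) (htilt : tilt_stable_min phi xbar) :
  exists2 r : R, 0 < r &
    forall x : 'rV[R]_n, enorm (x - xbar) < r ->
      Upsilon G x !=set0 /\ compact (Upsilon G x).
Proof.
have [m [r [gam [del [K [L T]]]]]] := tilt_setting_of hC11 htilt.
have [r1 r10 bounded] := upsilon_bounded_near T.
have [r2 r20 nonempty] := upsilon_nonempty_near T.
exists (Num.min r1 r2); first by rewrite lt_min r10 r20.
move=> x; rewrite lt_min => /andP[x_r1 x_r2]; split; first exact: nonempty.
apply: bounded_closed_compact; last exact: closed_graph_deriv.
exact: bounded_enorm (bounded x x_r1).
Qed.
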